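(* $\mathbf{K4}^{\nabla\bullet}$ is strongly complete with respect to the class of transitive frames: for every set $\Gamma\cup\{\phi\}\subseteq\mathcal{L}(\nabla,\bullet)$, if for every Kripke model $\mathcal{M}$ with transitive accessibility relation and every state $s$, $\mathcal{M},s\vDash\Gamma$ implies $\mathcal{M},s\vDash\phi$, then $\Gamma\vdash_{\mathbf{K4}^{\nabla\bullet}}\phi$.
   Context: $\mathcal{L}(\nabla,\bullet)$: $\phi::=p\mid\neg\phi\mid\phi\land\phi\mid\nabla\phi\mid\bullet\phi$ over a nonempty set $\mathbf{P}$ of propositional variables; $\Delta\phi:=\neg\nabla\phi$, $\circ\phi:=\neg\bullet\phi$. Kripke models $\langle S,R,V\rangle$: $s\vDash\nabla\phi$ iff there are $t,u$ with $sRt$, $sRu$, $t\vDash\phi$, $u\nvDash\phi$; $s\vDash\bullet\phi$ iff $s\vDash\phi$ and there is $t$ with $sRt$, $t\nvDash\phi$. The Hilbert system $\mathbf{K}^{\nabla\bullet}$ has axioms: A0 all propositional tautologies; A1 $\bullet\phi\to\phi$; A2 $\nabla\phi\leftrightarrow\nabla\neg\phi$; A3 $\bullet(\psi\to\phi)\land\phi\to\bullet\phi$; A4 $\nabla(\phi\land\psi)\to\nabla\phi\vee\nabla\psi$; A5 $\bullet(\phi\land\psi)\to\bullet\phi\vee\bullet\psi$; A6 $\nabla\phi\to\bullet\phi\vee\bullet\neg\phi$; A7 $\bullet(\phi\to\psi)\land\bullet(\neg\phi\to\chi)\to\nabla\phi$; rules R1 $\phi/\Delta\phi$; R2 $\phi/\circ\phi$;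 R3 $\phi\leftrightarrow\psi/\Delta\phi\leftrightarrow\Delta\psi$; R4 $\phi\leftrightarrow\psi/\circ\phi\leftrightarrow\circ\psi$; MP. $\mathbf{K4}^{\nabla\bullet}$ adds the axiom schemas A4-1 $\Delta\phi\to\Delta\Delta\phi$; A4-2 $\Delta\phi\to\circ(\psi\to\Delta\phi)$; A4-3 $\bullet\psi_1\land\Delta\phi\land\circ(\neg\psi_1\to\phi)\to\Delta\circ(\neg\psi_2\to\phi)$; A4-4 $\bullet\psi_1\land\Delta\phi\land\circ(\neg\psi_1\to\phi)\to\circ(\neg\psi_1\to\circ(\neg\psi_2\to\phi))$. $\Gamma\vdash\phi$ means $\vdash(\gamma_1\land\dots\land\gamma_n)\to\phi$ for some finite subset of $\Gamma$. *)

From Stdlib Require Import List.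
Import ListNotations.
Set Implicit Arguments.

Section Lang.
Variable P : Type.

Inductive form : Type :=
| Var : P -> form
| Neg : form -> form
| And : form -> form -> form
| Nab : form -> form
| Bul : form -> form.

Definition Impl (a b : form) : form := Neg (And a (Neg b)).
Definition Or (a b : form) : form := Neg (And (Neg a) (Neg b)).
Definition Iff (a b : form) : form := And (Impl a b) (Impl b a).
Definition Del (a : form) : form := Neg (Nab a).
Definition Circ (a : form) : form := Neg (Bul a).

Fixpoint sat (S : Type) (R : S -> S -> Prop) (V : P -> S -> Prop) (s : S) (f : form) : Prop :=
  match f with
  | Var p => V p s
  | Neg a => ~ sat R V s a
  | And a b => sat R V s a /\ sat R V s b
  | Nab a => exists t u, R s t /\ R s u /\ sat R V t a /\ ~ sat R V u a
  | Bul a => sat R V s a /\ exists t, R s t /\ ~ sat R V t a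
  end.

(* Propositional tautologies: true under every boolean valuation that treats
   propositional variables and modal formulas (nabla a, bullet a) as atoms. *)
Fixpoint beval (v : form -> bool) (f : form) : bool :=
  match f with
  | Var _ => v f
  | Neg a => negb (beval v a)
  | And a b => andb (beval v a) (beval v b)
  | Nab _ => v f
  | Bul _ => v f
  end.

Definition tautology (f : form) : Prop := forall v : form -> bool, beval v f = true.

Inductive thmK4 : form -> Prop :=
| A0 : forall f, tautology f -> thmK4 f
| A1 : forall f, thmK4 (Impl (Bul f) f)
| A2 : forall f, thmK4 (Iff (Nab f) (Nab (Neg f)))
| A3 : forall f g, thmK4 (Impl (And (Bul (Impl g f)) f) (Bul f))
| A4 : forall f g, thmK4 (Impl (Nab (And f g)) (Or (Nab f) (Nab g)))
| A5 : forall f g, thmK4 (Impl (Bul (And f g)) (Or (Bul f) (Bul g)))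
| A6 : forall f, thmK4 (Impl (Nab f) (Or (Bul f) (Bul (Neg f))))
| A7 : forall f g h,
    thmK4 (Impl (And (Bul (Impl f g)) (Bul (Impl (Neg f) h))) (Nab f))
| A4_1 : forall f, thmK4 (Impl (Del f) (Del (Del f)))
| A4_2 : forall f g, thmK4 (Impl (Del f) (Circ (Impl g (Del f))))
| A4_3 : forall f g1 g2,
    thmK4 (Impl (And (And (Bul g1) (Del f)) (Circ (Impl (Neg g1) f)))
                (Del (Circ (Impl (Neg g2) f))))
| A4_4 : forall f g1 g2,
    thmK4 (Impl (And (And (Bul g1) (Del f)) (Circ (Impl (Neg g1) f)))
                (Circ (Impl (Neg g1) (Circ (Impl (Neg g2) f)))))
| R1 : forall f, thmK4 f -> thmK4 (Del f)
| R2 : forall f, thmK4 f -> thmK4 (Circ f)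
| R3 : forall f g, thmK4 (Iff f g) -> thmK4 (Iff (Del f) (Del g))
| R4 : forall f g, thmK4 (Iff f g) -> thmK4 (Iff (Circ f) (Circ g))
| MP : forall f g, thmK4 (Impl f g) -> thmK4 f -> thmK4 g.

(* Gamma |- phi : |- (g1 /\ ... /\ gn) -> phi for some finite subset of Gamma;
   the case n = 0 is read as |- phi. Conjunction is left-associated. *)
Definition derivesK4 (Gamma : form -> Prop) (phi : form) : Prop :=
  thmK4 phi \/
  exists (g : form) (gs : list form),
    Gamma g /\ (forall x, In x gs -> Gamma x) /\
    thmK4 (Impl (fold_left And gs g) phi).

End Lang.

Definition transitive_rel (S : Type) (R : S -> S -> Prop) : Prop :=
  forall x y z, R x y -> R y z -> R x z.

(* If Gamma does not derive phi, then Gamma plus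
   ~phi extends (by Zorn's lemma) to a maximal consistent set, and the states of
   the canonical model are the maximal consistent sets.  The language has no
   box, so the accessibility relation is defined through a derived one: b is
   necessary at M if M contains Del b and Circ (~ps -> b) for a witness Bul ps
   in M (or just b, if M contains no Bul formula), and M sees T if T contains
   every formula necessary at M.  Axiom A7 makes this independent of the
   witness, A1-A7 give the truth lemma for Nab and Bul, and A4-1 .. A4-4 say
   exactly that Del b and Circ (~g -> b) are necessary whenever b is, which
   makes the relation transitive. *)

From Stdlib Require Import List Classical.
From mathcomp Require classical_sets.
Import ListNotations.

Section Completeness.
Variable P : Type.
Variable p0 : P.
Notation F := (form P).
Notation thm := (@thmK4 P).

Ltac taut :=
  let v := fresh "v" in
  intro v; unfold Impl, Or, Iff, Del, Circ in *; cbn;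
  repeat match goal with
  | |- context [beval v ?x] => destruct (beval v x)
  | |- context [v ?x] => destruct (v x)
  end;
  cbn; repeat (let H := fresh in intro H; try discriminate H); reflexivity.

Lemma thm_taut1 (a b : F) :
  (forall v, beval v a = true -> beval v b = true) -> thm a -> thm b.
Proof.
  intros Hab Ha. apply (MP (f := a)); [|exact Ha].
  apply A0. intro v. specialize (Hab v). unfold Impl; cbn.
  destruct (beval v a), (beval v b); auto.
Qed.

Lemma thm_taut2 (a c b : F) :
  (forall v, beval v a = true -> beval v c = true -> beval v b = true) ->
  thm a -> thm c -> thm b.
Proof.
  intros Hacb Ha Hc. apply (MP (f := c)); [|exact Hc].
  apply (MP (f := a)); [|exact Ha].
  apply A0. intro v. specialize (Hacb v). unfold Impl; cbn.
  destruct (beval v a), (beval v b), (beval v c); auto.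
Qed.

(* The language has no constant for truth, so the empty conjunction is
   [p0 -> p0]; this is why the theorem assumes [P] inhabited. *)
Definition top : F := Impl (Var p0) (Var p0).
Definition conj (l : list F) : F := fold_right (@And P) top l.

Lemma thm_top : thm top.
Proof. apply A0. unfold top. taut. Qed.

Lemma beval_conj v l : beval v (conj l) = forallb (beval v) l.
Proof.
  induction l as [|a l IH].
  - cbn. destruct (v (Var p0)); reflexivity.
  - change (conj (a :: l)) with (And a (conj l)). cbn [beval forallb].
    rewrite IH. reflexivity.
Qed.

Lemma beval_fold_left_And v gs g :
  beval v (fold_left (@And P) gs g) = andb (beval v g) (forallb (beval v) gs).
Proof.
  revert g; induction gs as [|a gs IH]; intro g; cbn.
  - destruct (beval v g); reflexivity.
  - rewrite IH; cbn. destruct (beval v g), (beval v a); reflexivity.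
Qed.

Definition add (X : F -> Prop) (a : F) : F -> Prop := fun x => X x \/ x = a.

Definition inconsistent (X : F -> Prop) : Prop :=
  exists l, (forall x, In x l -> X x) /\ thm (Neg (conj l)).

Definition maximal_consistent (M : F -> Prop) : Prop :=
  ~ inconsistent M /\ forall f, M f \/ M (Neg f).

Lemma inconsistent_mono (X Y : F -> Prop) :
  (forall x, X x -> Y x) -> inconsistent X -> inconsistent Y.
Proof. intros XY [l [Hl Hn]]. exists l; split; auto. Qed.

Lemma list_in_add_split (X : F -> Prop) a l :
  (forall x, In x l -> add X a x) ->
  exists l', (forall x, In x l' -> X x) /\
    forall v, forallb (beval v) l' = true -> beval v a = true ->
              forallb (beval v) l = true.
Proof.
  induction l as [|b l IH]; intro Hl.
  - exists []. split; [intros x []|reflexivity].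
  - destruct IH as [l' [Hl' Hv]]; [intros; apply Hl; right; auto|].
    destruct (Hl b (or_introl eq_refl)) as [Hb|<-].
    + exists (b :: l'). split; [intros x [<-|Hx]; auto|].
      intros v; cbn. intros E Ea. apply andb_prop in E as [-> E]. cbn. auto.
    + exists l'. split; [exact Hl'|]. intros v E Ea; cbn. rewrite Ea; cbn; auto.
Qed.

Lemma inconsistent_add (X : F -> Prop) a :
  inconsistent (add X a) ->
  exists l, (forall x, In x l -> X x) /\ thm (Impl (conj l) (Neg a)).
Proof.
  intros [l [Hl Hn]]. destruct (list_in_add_split X a l Hl) as [l' [Hl' Hv]].
  exists l'. split; [exact Hl'|]. revert Hn. apply thm_taut1. intro v.
  specialize (Hv v). unfold Impl; cbn. rewrite !beval_conj.
  destruct (forallb (beval v) l'), (beval v a), (forallb (beval v) l); cbn; auto.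
Qed.

Lemma consistent_add_or_neg (X : F -> Prop) f :
  ~ inconsistent X -> ~ inconsistent (add X f) \/ ~ inconsistent (add X (Neg f)).
Proof.
  intro HX. apply not_and_or. intros [Hf Hnf].
  apply inconsistent_add in Hf as [l1 [Hl1 T1]].
  apply inconsistent_add in Hnf as [l2 [Hl2 T2]].
  apply HX. exists (l1 ++ l2). split.
  - intros x Hx. apply in_app_or in Hx as [Hx|Hx]; auto.
  - revert T1 T2. apply thm_taut2. intro v. unfold Impl; cbn.
    rewrite !beval_conj, forallb_app.
    destruct (forallb (beval v) l1), (forallb (beval v) l2), (beval v f); auto.
Qed.

Lemma list_in_union_of_chain (X : F -> Prop) (C : (F -> Prop) -> Prop) l :
  classical_sets.total_on C classical_sets.subset ->
  (forall x, In x l -> X x \/ exists2 Y, C Y & Y x) ->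
  (forall x, In x l -> X x) \/
  exists Y, C Y /\ forall x, In x l -> X x \/ Y x.
Proof.
  intros Htot. induction l as [|a l IH]; intro Hl; [left; intros x []|].
  destruct IH as [IH|[Y [CY HY]]]; [intros; apply Hl; right; auto| |].
  - destruct (Hl a (or_introl eq_refl)) as [Ha|[Y CY Ya]].
    + left. intros x [<-|Hx]; auto.
    + right. exists Y. split; [exact CY|]. intros x [<-|Hx]; auto.
  - right. destruct (Hl a (or_introl eq_refl)) as [Ha|[Z CZ Za]].
    + exists Y. split; [exact CY|]. intros x [<-|Hx]; auto.
    + destruct (Htot Y Z CY CZ) as [YZ|ZY].
      * exists Z. split; [exact CZ|]. intros x [<-|Hx]; auto.
        destruct (HY x Hx); auto.
      * exists Y. split; [exact CY|]. intros x [<-|Hx]; auto.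
Qed.

Lemma lindenbaum (X : F -> Prop) :
  ~ inconsistent X -> exists M, maximal_consistent M /\ forall x, X x -> M x.
Proof.
  intro HX.
  destruct (classical_sets.Zorn_bigcup (T := F)
              (P := fun A => ~ inconsistent (fun x => X x \/ A x)))
    as [A [HA Hmax]].
  - intros C HC Htot [l [Hl Hn]].
    destruct (list_in_union_of_chain X C l Htot Hl) as [HlX|[Y [CY HlY]]].
    + apply HX. exists l; auto.
    + apply (HC Y CY). exists l; auto.
  - exists (fun x => X x \/ A x). split; [split; [exact HA|]|auto].
    assert (Hin : forall f, ~ inconsistent (add (fun x => X x \/ A x) f) -> X f \/ A f).
    { intros f Hf. right. apply NNPP. intro Af.
      apply (Hmax (fun x => A x \/ x = f)).
      - split; [intros x Hx; auto|]. intro Sub. apply Af, Sub. auto.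
      - intro Hi. apply Hf. revert Hi. apply inconsistent_mono.
        intros x [Hx|[Hx|Hx]]; [left; auto|left; auto|right; auto]. }
    intro f. destruct (consistent_add_or_neg _ f HA) as [Hf|Hf];
      [left|right]; apply Hin, Hf.
Qed.

Section MaximalConsistent.
Variable M : F -> Prop.
Hypothesis HM : maximal_consistent M.

Lemma mcs_taut l b :
  (forall x, In x l -> M x) ->
  (forall v, forallb (beval v) l = true -> beval v b = true) -> M b.
Proof.
  intros Hl Hb. destruct (proj2 HM b) as [H|H]; [exact H|]. exfalso.
  apply (proj1 HM). exists (Neg b :: l). split; [intros x [<-|Hx]; auto|].
  apply A0. intro v. change (conj (Neg b :: l)) with (And (Neg b) (conj l)).
  cbn. rewrite beval_conj. specialize (Hb v).
  destruct (forallb (beval v) l), (beval v b); auto.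
Qed.

Lemma mcs_taut1 a b :
  (forall v, beval v a = true -> beval v b = true) -> M a -> M b.
Proof.
  intros Hab Ha. apply (mcs_taut [a]); [intros x [<-|[]]; exact Ha|].
  intro v; cbn. specialize (Hab v). destruct (beval v a); auto.
Qed.

Lemma mcs_taut2 a c b :
  (forall v, beval v a = true -> beval v c = true -> beval v b = true) ->
  M a -> M c -> M b.
Proof.
  intros Hacb Ha Hc. apply (mcs_taut [a; c]); [intros x [<-|[<-|[]]]; auto|].
  intro v; cbn. specialize (Hacb v). destruct (beval v a), (beval v c); auto.
Qed.

Lemma mcs_thm a : thm a -> M a.
Proof.
  intro Ha. destruct (proj2 HM a) as [H|H]; [exact H|]. exfalso.
  apply (proj1 HM). exists [Neg a]. split; [intros x [<-|[]]; exact H|].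
  revert Ha. apply thm_taut1. intro v.
  change (conj [Neg a]) with (And (Neg a) top). unfold top, Impl; cbn.
  destruct (beval v a), (v (Var p0)); auto.
Qed.

Lemma mcs_neg a : M (Neg a) <-> ~ M a.
Proof.
  split.
  - intros Hn Ha. apply (proj1 HM). exists [a; Neg a].
    split; [intros x [<-|[<-|[]]]; auto|].
    apply A0. intro v. change (conj [a; Neg a]) with (And a (And (Neg a) top)).
    cbn. destruct (beval v a); reflexivity.
  - intro Ha. destruct (proj2 HM a); tauto.
Qed.

Lemma mcs_mp a b : thm (Impl a b) -> M a -> M b.
Proof.
  intros Hab Ha. apply (mcs_taut2 (Impl a b) a); [|exact (mcs_thm _ Hab)|exact Ha].
  intro v. unfold Impl; cbn. destruct (beval v a), (beval v b); auto.
Qed.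

Lemma mcs_and a b : M (And a b) <-> M a /\ M b.
Proof.
  split.
  - intro Hab; split; revert Hab; apply mcs_taut1; taut.
  - intros [Ha Hb]; revert Ha Hb; apply mcs_taut2; taut.
Qed.

Lemma mcs_mp2 a c b : thm (Impl (And a c) b) -> M a -> M c -> M b.
Proof. intros Hacb Ha Hc. apply (mcs_mp _ _ Hacb), mcs_and; auto. Qed.

Lemma mcs_or a b : M (Or a b) -> M a \/ M b.
Proof.
  intro Hab. destruct (classic (M a)) as [Ha|Ha]; [left; exact Ha|right].
  apply mcs_neg in Ha. revert Ha Hab. apply mcs_taut2. taut.
Qed.

Lemma mcs_iff a b : thm (Iff a b) -> M a <-> M b.
Proof.
  intros Hab; split; apply mcs_mp; revert Hab; apply thm_taut1; taut.
Qed.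

Lemma mcs_Del a : M (Del a) <-> ~ M (Nab a).
Proof. apply mcs_neg. Qed.

Lemma mcs_Circ a : M (Circ a) <-> ~ M (Bul a).
Proof. apply mcs_neg. Qed.

Lemma mcs_Bul_congr a b : thm (Iff a b) -> M (Bul a) -> M (Bul b).
Proof.
  intros Hab Ha. apply NNPP. rewrite <- mcs_Circ, <- (mcs_iff _ _ (R4 Hab)), mcs_Circ.
  tauto.
Qed.

Lemma mcs_Nab_congr a b : thm (Iff a b) -> M (Nab a) -> M (Nab b).
Proof.
  intros Hab Ha. apply NNPP. rewrite <- mcs_Del, <- (mcs_iff _ _ (R3 Hab)), mcs_Del.
  tauto.
Qed.

Lemma mcs_Bul_T a : M (Bul a) -> M a.
Proof. apply mcs_mp, A1. Qed.

End MaximalConsistent.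

(* [box_at M ps b] is the paper's way of reading "b holds at every successor"
   off an MCS [M] that contains a witness [Bul ps]: b is not contingent, and b
   cannot fail at a successor where ps fails. *)
Definition box_at (M : F -> Prop) (ps b : F) : Prop :=
  M (Del b) /\ M (Circ (Impl (Neg ps) b)).

(* If [M] contains no [Bul] formula, every successor satisfies whatever the
   state satisfies, so there "necessary" just means "true". *)
Definition necessary (M : F -> Prop) (b : F) : Prop :=
  (forall ps, M (Bul ps) -> box_at M ps b) /\
  ((forall ps, ~ M (Bul ps)) -> M b).

Section CanonicalBox.
Variable M : F -> Prop.
Hypothesis HM : maximal_consistent M.

Lemma Bul_impl_of_Circ ps b :
  M (Bul ps) -> M (Circ (Impl (Neg ps) b)) -> M (Bul (Impl b ps)).
Proof.
  intros Hps Hb. apply (mcs_Circ _ HM) in Hb.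
  assert (H : M (Bul (And (Impl (Neg ps) b) (Impl b ps)))).
  { revert Hps. apply (mcs_Bul_congr _ HM), A0. taut. }
  apply (mcs_mp _ HM _ _ (A5 _ _)), (mcs_or _ HM) in H. tauto.
Qed.

Lemma not_Bul_neg_impl b ps :
  M (Del b) -> M (Bul (Impl b ps)) -> forall d, ~ M (Bul (Impl (Neg b) d)).
Proof.
  intros Hb Hps d Hd. apply (mcs_Del _ HM) in Hb.
  exact (Hb (mcs_mp2 _ HM _ _ _ (A7 b ps d) Hps Hd)).
Qed.

Lemma box_at_indep ps1 ps2 b :
  M (Bul ps1) -> M (Bul ps2) -> box_at M ps1 b -> box_at M ps2 b.
Proof.
  intros H1 H2 [Db Cb]. split; [exact Db|]. apply (mcs_Circ _ HM). intro H.
  apply (not_Bul_neg_impl b ps1 Db (Bul_impl_of_Circ _ _ H1 Cb) ps2).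
  revert H. apply (mcs_Bul_congr _ HM), A0. taut.
Qed.

Lemma Circ_impl_mono ps b c :
  M (Bul ps) -> M (Circ (Impl (Neg ps) b)) -> thm (Impl b c) ->
  M (Circ (Impl (Neg ps) c)).
Proof.
  intros Hps Cb Hbc. apply (mcs_Circ _ HM). intro H.
  apply (mcs_Circ _ HM) in Cb. apply Cb.
  assert (Hb : M (Impl (Neg ps) b)).
  { apply (mcs_taut1 _ HM ps); [taut|exact (mcs_Bul_T _ HM _ Hps)]. }
  refine (mcs_mp2 _ HM _ _ _ (A3 _ (Neg (Impl (Neg ps) c))) _ Hb).
  revert H. apply (mcs_Bul_congr _ HM). revert Hbc. apply thm_taut1. taut.
Qed.

Lemma Del_mono ps b c :
  M (Bul ps) -> box_at M ps b -> thm (Impl b c) -> M (Del c).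
Proof.
  intros Hps [Db Cb] Hbc.
  assert (Cc := Circ_impl_mono _ _ _ Hps Cb Hbc).
  assert (Hno := not_Bul_neg_impl b ps Db (Bul_impl_of_Circ _ _ Hps Cb)).
  apply (mcs_Del _ HM). intro Nc.
  destruct (mcs_or _ HM _ _ (mcs_mp _ HM _ _ (A6 c) Nc)) as [Bc|Bnc].
  - assert (H : M (Bul (And (Impl (Neg ps) c) (Impl ps c)))).
    { revert Bc. apply (mcs_Bul_congr _ HM), A0. taut. }
    apply (mcs_mp _ HM _ _ (A5 _ _)), (mcs_or _ HM) in H as [H|H].
    + apply (mcs_Circ _ HM) in Cc. exact (Cc H).
    + apply (Hno (Impl ps c)). revert H. apply (mcs_Bul_congr _ HM).
      revert Hbc. apply thm_taut1. taut.
  - assert (Hnc := mcs_Bul_T _ HM _ Bnc).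
    assert (H : M (Nab (And (Impl (Neg b) (Neg c)) (Neg b)))).
    { apply (mcs_iff _ HM _ _ (A2 c)) in Nc. revert Nc. apply (mcs_Nab_congr _ HM).
      revert Hbc. apply thm_taut1. taut. }
    apply (mcs_mp _ HM _ _ (A4 _ _)), (mcs_or _ HM) in H as [H|H].
    + apply (mcs_mp _ HM _ _ (A6 _)), (mcs_or _ HM) in H as [H|H].
      * exact (Hno _ H).
      * apply (proj1 (mcs_neg _ HM c) Hnc).
        apply (mcs_taut1 _ HM (Neg (Impl (Neg b) (Neg c)))); [taut|].
        exact (mcs_Bul_T _ HM _ H).
    + apply (mcs_Del _ HM) in Db. apply Db, (mcs_iff _ HM _ _ (A2 b)), H.
Qed.

Lemma box_at_mono ps b c :
  M (Bul ps) -> box_at M ps b -> thm (Impl b c) -> box_at M ps c.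
Proof.
  intros Hps Hb Hbc. split.
  - exact (Del_mono _ _ _ Hps Hb Hbc).
  - exact (Circ_impl_mono _ _ _ Hps (proj2 Hb) Hbc).
Qed.

Lemma box_at_and ps b1 b2 :
  box_at M ps b1 -> box_at M ps b2 -> box_at M ps (And b1 b2).
Proof.
  intros [D1 C1] [D2 C2].
  apply (mcs_Del _ HM) in D1, D2. apply (mcs_Circ _ HM) in C1, C2. split.
  - apply (mcs_Del _ HM). intro H.
    apply (mcs_mp _ HM _ _ (A4 _ _)), (mcs_or _ HM) in H. tauto.
  - apply (mcs_Circ _ HM). intro H.
    assert (H' : M (Bul (And (Impl (Neg ps) b1) (Impl (Neg ps) b2)))).
    { revert H. apply (mcs_Bul_congr _ HM), A0. taut. }
    apply (mcs_mp _ HM _ _ (A5 _ _)), (mcs_or _ HM) in H'. tauto.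
Qed.

Lemma box_at_thm ps b : thm b -> box_at M ps b.
Proof.
  intro Hb. split; apply (mcs_thm _ HM).
  - exact (R1 Hb).
  - apply R2. revert Hb. apply thm_taut1. taut.
Qed.

Lemma necessary_thm b : thm b -> necessary M b.
Proof.
  intro Hb. split; [intros; apply box_at_thm, Hb|intros; apply (mcs_thm _ HM), Hb].
Qed.

Lemma necessary_and b1 b2 :
  necessary M b1 -> necessary M b2 -> necessary M (And b1 b2).
Proof.
  intros [B1 N1] [B2 N2]. split.
  - intros ps Hps. apply box_at_and; auto.
  - intros Hn. apply (mcs_and _ HM); auto.
Qed.

Lemma necessary_conj l :
  (forall x, In x l -> necessary M x) -> necessary M (conj l).
Proof.
  induction l as [|a l IH]; intro Hl; [exact (necessary_thm _ thm_top)|].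
  apply necessary_and; [apply Hl; left; reflexivity|].
  apply IH. intros x Hx. apply Hl. right. exact Hx.
Qed.

Lemma necessary_mono b c : necessary M b -> thm (Impl b c) -> necessary M c.
Proof.
  intros [Bb Nb] Hbc. split.
  - intros ps Hps. exact (box_at_mono _ _ _ Hps (Bb ps Hps) Hbc).
  - intros Hn. exact (mcs_mp _ HM _ _ Hbc (Nb Hn)).
Qed.

Lemma Bul_not_necessary a : M (Bul a) -> ~ necessary M a.
Proof.
  intros Ha [Ba _]. destruct (Ba a Ha) as [_ C]. apply (mcs_Circ _ HM) in C.
  apply C. revert Ha. apply (mcs_Bul_congr _ HM), A0. taut.
Qed.

Lemma necessary_of_not_Bul a : M a -> ~ M (Bul a) -> necessary M a.
Proof.
  intros Ha Hna. split; [|intros _; exact Ha]. intros ps Hps. split.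
  - apply (mcs_Del _ HM). intro N.
    apply (mcs_mp _ HM _ _ (A6 a)), (mcs_or _ HM) in N as [N|N]; [exact (Hna N)|].
    exact (proj1 (mcs_neg _ HM a) (mcs_Bul_T _ HM _ N) Ha).
  - apply (mcs_Circ _ HM). intro H. exact (Hna (mcs_mp2 _ HM _ _ _ (A3 a (Neg ps)) H Ha)).
Qed.

Lemma Nab_Bul_witness a : M (Nab a) -> exists ps, M (Bul ps).
Proof.
  intro Ha. apply (mcs_mp _ HM _ _ (A6 _)), (mcs_or _ HM) in Ha as [H|H]; eauto.
Qed.

Lemma Nab_not_necessary a : M (Nab a) -> ~ necessary M a /\ ~ necessary M (Neg a).
Proof.
  intro Ha. destruct (Nab_Bul_witness _ Ha) as [ps Hps].
  split; intros [B _]; apply (proj1 (mcs_Del _ HM _) (proj1 (B ps Hps))).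
  - exact Ha.
  - exact (proj1 (mcs_iff _ HM _ _ (A2 a)) Ha).
Qed.

Lemma necessary_of_not_Nab a : ~ M (Nab a) -> necessary M a \/ necessary M (Neg a).
Proof.
  intro Ha. destruct (classic (exists ps, M (Bul ps))) as [[ps Hps]|Hnone].
  - assert (Da : M (Del a)) by (apply (mcs_Del _ HM); exact Ha).
    assert (Dna : M (Del (Neg a))).
    { apply (mcs_Del _ HM). rewrite <- (mcs_iff _ HM _ _ (A2 a)). exact Ha. }
    assert (C : M (Circ (Impl (Neg ps) a)) \/ M (Circ (Impl (Neg ps) (Neg a)))).
    { rewrite !(mcs_Circ _ HM). apply not_and_or. intros [H1 H2]. apply Ha.
      apply (mcs_mp2 _ HM _ _ _ (A7 a ps ps)).
      - revert H2. apply (mcs_Bul_congr _ HM), A0. taut.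
      - revert H1. apply (mcs_Bul_congr _ HM), A0. taut. }
    destruct C as [C|C]; [left|right]; split;
      [| intro Hn; exfalso; exact (Hn ps Hps) | | intro Hn; exfalso; exact (Hn ps Hps)];
      intros ps' Hps'; apply (box_at_indep ps ps' _ Hps Hps'); split; assumption.
  - destruct (proj2 HM a); [left|right]; split; auto;
      intros ps Hps; exfalso; eauto.
Qed.

Lemma necessary_Del_Circ a :
  necessary M a -> necessary M (Del a) /\ forall g, necessary M (Circ (Impl (Neg g) a)).
Proof.
  intros [Ba Na]. split; [|intro g]; split.
  - intros ps Hps. destruct (Ba ps Hps) as [D _]. split.
    + exact (mcs_mp _ HM _ _ (A4_1 _) D).
    + exact (mcs_mp _ HM _ _ (A4_2 _ _) D).
  - intros Hn. apply (mcs_Del _ HM). intro H.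
    destruct (Nab_Bul_witness _ H) as [ps Hps]. exact (Hn ps Hps).
  - intros ps Hps. destruct (Ba ps Hps) as [D C].
    assert (H : M (And (And (Bul ps) (Del a)) (Circ (Impl (Neg ps) a))))
      by (rewrite !(mcs_and _ HM); tauto).
    split.
    + exact (mcs_mp _ HM _ _ (A4_3 a ps g) H).
    + exact (mcs_mp _ HM _ _ (A4_4 a ps g) H).
  - intros Hn. apply (mcs_Circ _ HM), Hn.
Qed.
End CanonicalBox.

Lemma canonical_successor M c :
  maximal_consistent M -> ~ necessary M c ->
  exists T, maximal_consistent T /\ (forall x, necessary M x -> T x) /\ ~ T c.
Proof.
  intros HM Hc.
  destruct (lindenbaum (add (necessary M) (Neg c))) as [T [HT HMT]].
  - intro Hi. apply inconsistent_add in Hi as [l [Hl Hlc]]. apply Hc.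
    apply (necessary_mono _ HM (conj l)); [exact (necessary_conj _ HM l Hl)|].
    revert Hlc. apply thm_taut1. taut.
  - exists T. split; [exact HT|]. split; [intros x Hx; apply HMT; left; exact Hx|].
    apply (mcs_neg _ HT), HMT. right. reflexivity.
Qed.

Definition canon_state : Type := { M : F -> Prop | maximal_consistent M }.

Definition canon_rel (s t : canon_state) : Prop :=
  forall x, necessary (proj1_sig s) x -> proj1_sig t x.

Definition canon_val (p : P) (s : canon_state) : Prop := proj1_sig s (Var p).

Lemma canon_rel_trans : transitive_rel canon_rel.
Proof.
  intros [s Hs] [t Ht] [u Hu]; unfold canon_rel; cbn. intros Rst Rtu x Hx.
  apply Rtu. destruct (necessary_Del_Circ _ Hs x Hx) as [D C]. split.
  - intros ps _. split; apply Rst; auto.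
  - intros _. apply Rst, Hx.
Qed.

Notation canon_sat := (sat canon_rel canon_val).

Lemma truth_Nab f :
  (forall s, canon_sat s f <-> proj1_sig s f) ->
  forall s, canon_sat s (Nab f) <-> proj1_sig s (Nab f).
Proof.
  intros IH [s Hs]. cbn [sat proj1_sig]. split.
  - intros [t [u [Rt [Ru [Ht Hu]]]]]. rewrite IH in Ht, Hu.
    apply NNPP. intro Hn.
    destruct (necessary_of_not_Nab _ Hs _ Hn) as [N|N].
    + exact (Hu (Ru _ N)).
    + exact (proj1 (mcs_neg _ (proj2_sig t) f) (Rt _ N) Ht).
  - intro H. destruct (Nab_not_necessary _ Hs _ H) as [Nf Nnf].
    destruct (canonical_successor _ _ Hs Nf) as [u [Hu [Ru Fu]]].
    destruct (canonical_successor _ _ Hs Nnf) as [t [Ht [Rt Ft]]].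
    exists (exist _ t Ht), (exist _ u Hu). do 2 (split; [assumption|]).
    rewrite !IH; cbn. split; [|exact Fu].
    apply NNPP. rewrite <- (mcs_neg _ Ht). exact Ft.
Qed.

Lemma truth_Bul f :
  (forall s, canon_sat s f <-> proj1_sig s f) ->
  forall s, canon_sat s (Bul f) <-> proj1_sig s (Bul f).
Proof.
  intros IH [s Hs]. cbn [sat proj1_sig]. rewrite IH; cbn. split.
  - intros [Hf [t [Rt Ht]]]. rewrite IH in Ht.
    apply NNPP. intro Hn. exact (Ht (Rt _ (necessary_of_not_Bul _ Hs _ Hf Hn))).
  - intro H. split; [exact (mcs_Bul_T _ Hs _ H)|].
    destruct (canonical_successor _ _ Hs (Bul_not_necessary _ Hs _ H)) as [t [Ht [Rt Ft]]].
    exists (exist _ t Ht). split; [exact Rt|]. rewrite IH. exact Ft.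
Qed.

Lemma truth_lemma f : forall s, canon_sat s f <-> proj1_sig s f.
Proof.
  induction f as [p|f IH|f1 IH1 f2 IH2|f IH|f IH]; intros [s Hs].
  - reflexivity.
  - cbn [sat]. rewrite IH. symmetry. apply (mcs_neg _ Hs).
  - cbn [sat]. rewrite IH1, IH2. symmetry. apply (mcs_and _ Hs).
  - apply truth_Nab, IH.
  - apply truth_Bul, IH.
Qed.

Lemma consistent_add_neg (Gamma : F -> Prop) phi :
  ~ derivesK4 Gamma phi -> ~ inconsistent (add Gamma (Neg phi)).
Proof.
  intros D Hi. apply inconsistent_add in Hi as [l [Hl Hlphi]]. apply D.
  destruct l as [|g gs].
  - left. apply (thm_taut2 top (Impl (conj []) (Neg (Neg phi))) phi);
      [unfold top; taut|exact thm_top|exact Hlphi].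
  - right. exists g, gs. split; [apply Hl; left; reflexivity|].
    split; [intros x Hx; apply Hl; right; exact Hx|].
    revert Hlphi. apply thm_taut1. intro v. unfold Impl; cbn.
    rewrite beval_conj, beval_fold_left_And; cbn.
    destruct (beval v g), (forallb (beval v) gs), (beval v phi); auto.
Qed.

Lemma strong_completeness (Gamma : F -> Prop) (phi : F) :
  (forall (S : Type) (R : S -> S -> Prop) (V : P -> S -> Prop),
     transitive_rel R ->
     forall s : S, (forall psi, Gamma psi -> sat R V s psi) -> sat R V s phi) ->
  derivesK4 Gamma phi.
Proof.
  intro Hsem. apply NNPP. intro D.
  destruct (lindenbaum _ (consistent_add_neg _ _ D)) as [M [HM HGM]].
  pose (s := exist _ M HM : canon_state).
  assert (Hphi : M phi).
  { apply (truth_lemma phi s), (Hsem _ _ _ canon_rel_trans).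
    intros psi Hpsi. apply (truth_lemma psi s), HGM. left. exact Hpsi. }
  apply (mcs_neg _ HM phi); [|exact Hphi]. apply HGM. right. reflexivity.
Qed.

End Completeness.

Theorem theorem3 (P : Type) (HP : inhabited P)
  (Gamma : form P -> Prop) (phi : form P) :
  (forall (S : Type) (R : S -> S -> Prop) (V : P -> S -> Prop),
     transitive_rel R ->
     forall s : S, (forall psi, Gamma psi -> sat R V s psi) -> sat R V s phi) ->
  derivesK4 Gamma phi.
Proof.
  destruct HP as [p0]. apply (strong_completeness _ p0).
Qed.
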